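(* Let $n\in\mathbb N$ and let $X_1,\dots,X_n$ be independent random variables with ${\sf E}X_i=0$ and $0<{\sf E}X_i^2<\infty$. Then for every $\varepsilon\in(0,\infty)$, $$L_n(1)+M_n(1)\le L_n(\varepsilon)+M_n(\varepsilon).$$
   Context: $B_n^2=\sum_{i=1}^n{\sf E}X_i^2$. For $\varepsilon>0$, $L_n(\varepsilon)=B_n^{-2}\sum_{i=1}^n{\sf E}X_i^2\mathbb I(|X_i|\ge\varepsilon B_n)$ and $M_n(\varepsilon)=B_n^{-3}\sum_{i=1}^n{\sf E}|X_i|^3\mathbb I(|X_i|<\varepsilon B_n)$, where $\mathbb I(A)$ is the indicator of the event $A$. *)

From HB Require Import structures.
From mathcomp Require Import all_boot all_order all_algebra.
From mathcomp Require Import all_classical all_reals all_analysis.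
Set Implicit Arguments. Unset Strict Implicit. Unset Printing Implicit Defensive.
Import Order.TTheory GRing.Theory Num.Theory.
Local Open Scope classical_set_scope.
Local Open Scope ring_scope.

Definition mutually_independent {d} {T : measurableType d} {R : realType}
  (P : probability T R) (n : nat) (X : 'I_n -> {RV P >-> R}) : Prop :=
  forall (S : {set 'I_n}) (A : 'I_n -> set R),
    (forall i, measurable (A i)) ->
    P (\bigcap_(i in [set j | j \in S]) (X i @^-1` A i)) =
    (\prod_(i in S) P (X i @^-1` A i))%E.

Definition Bn2 {d} {T : measurableType d} {R : realType}
  (P : probability T R) (n : nat) (X : 'I_n -> {RV P >-> R}) : R :=
  \sum_(i < n) fine ('E_P[(fun x => X i x ^+ 2)%R])%E.

Definition Bn {d} {T : measurableType d} {R : realType}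
  (P : probability T R) (n : nat) (X : 'I_n -> {RV P >-> R}) : R :=
  Num.sqrt (Bn2 X).

Definition Ln {d} {T : measurableType d} {R : realType}
  (P : probability T R) (n : nat) (X : 'I_n -> {RV P >-> R}) (eps : R) : \bar R :=
  ((Bn2 X)^-1%:E *
   \sum_(i < n) 'E_P[(fun x => X i x ^+ 2 * \1_[set y | eps * Bn X <= `|X i y|] x)%R])%E.

Definition Mn {d} {T : measurableType d} {R : realType}
  (P : probability T R) (n : nat) (X : 'I_n -> {RV P >-> R}) (eps : R) : \bar R :=
  (((Bn X) ^+ 3)^-1%:E *
   \sum_(i < n) 'E_P[(fun x => `|X i x| ^+ 3 * \1_[set y | `|X i y| < eps * Bn X] x)%R])%E.

(* With u = |X_i| / B_n, the i-th summand of L_n(eps) + M_n(eps) is the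
   expectation of w_eps(u) = u^2 1(u >= eps) + u^3 1(u < eps).  For eps = 1
   this weight is min(u^2, u^3), which lies below both u^2 and u^3 and hence
   below w_eps(u) for every eps. *)
From HB Require Import structures.
From mathcomp Require Import all_boot all_order all_algebra.
From mathcomp Require Import all_classical all_reals all_analysis.
From mathcomp Require Import ring measurable_realfun.
Import Order.TTheory GRing.Theory Num.Theory.
Local Open Scope classical_set_scope.
Local Open Scope ring_scope.

Section lindeberg_weight.
Context {R : realType}.

Definition lindeberg_weight (e u : R) : R :=
  u ^+ 2 * \1_`[e, +oo[ u + u ^+ 3 * \1_`]-oo, e[ u.

Lemma lindeberg_weight_ge0 e u : 0 <= u -> 0 <= lindeberg_weight e u.
Proof. by move=> u0; rewrite /lindeberg_weight !indicE addr_ge0 ?mulr_ge0 ?exprn_ge0. Qed.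

Lemma lindeberg_weight1 u : 0 <= u -> lindeberg_weight 1 u = Num.min (u ^+ 2) (u ^+ 3).
Proof.
move=> u0; rewrite /lindeberg_weight !indicE !mem_setE !in_itv /= andbT.
have [u1|u1] := leP 1 u; rewrite !mulr1 !mulr0 ?addr0 ?add0r.
- by rewrite min_l // [leRHS]exprS ler_peMl // exprn_ge0.
- by rewrite min_r // [leLHS]exprS ler_piMl // ?exprn_ge0 // ltW.
Qed.

Lemma lindeberg_weight1_le e u : 0 <= u -> lindeberg_weight 1 u <= lindeberg_weight e u.
Proof.
move=> u0; rewrite lindeberg_weight1 // /lindeberg_weight !indicE !mem_setE !in_itv /= andbT.
by case: leP => _; rewrite !mulr1 !mulr0 ?addr0 ?add0r ?ge_min lexx ?orbT.
Qed.

Lemma measurable_lindeberg_weight e : measurable_fun setT (lindeberg_weight e).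
Proof.
apply: measurable_funD; apply: measurable_funM; try exact: measurable_funX.
all: by apply: measurable_indic; exact: measurable_itv.
Qed.

Lemma lindeberg_weight_scale (e B a : R) : 0 < B ->
  lindeberg_weight e (`|a| / B) =
  (B ^+ 2)^-1 * (a ^+ 2 * (e * B <= `|a|)%R%:R) +
  (B ^+ 3)^-1 * (`|a| ^+ 3 * (`|a| < e * B)%R%:R).
Proof.
move=> B0; rewrite /lindeberg_weight !indicE !mem_setE !in_itv /= andbT.
rewrite ler_pdivlMr // ltr_pdivrMr // -(real_normK (num_real a)).
by field; rewrite gt_eqF.
Qed.

End lindeberg_weight.

Section expectation_comb.
Context d (T : measurableType d) (R : realType) (P : probability T R).
Local Open Scope ereal_scope.

Lemma ge0_expectationZD (c k : R) (f g : T -> R) : (0 <= c)%R -> (0 <= k)%R ->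
  measurable_fun setT f -> measurable_fun setT g ->
  (forall x, 0 <= f x)%R -> (forall x, 0 <= g x)%R ->
  'E_P[fun x => c * f x + k * g x]%R = c%:E * 'E_P[f] + k%:E * 'E_P[g].
Proof.
move=> c0 k0 mf mg f0 g0; rewrite !expectation.unlock.
under eq_integral => x _ do rewrite EFinD !EFinM.
rewrite ge0_integralD ?ge0_integralZl_EFin //.
all: by [move=> x _; rewrite lee_fin ?mulr_ge0 | exact/measurable_EFinP/measurable_funM
        | exact/measurable_EFinP].
Qed.

End expectation_comb.

Section measurable_norm_sets.
Context d (T : measurableType d) (R : realType) (f : T -> R).
Hypothesis mf : measurable_fun setT f.

Lemma measurable_ge_norm (c : R) : measurable [set x | c <= `|f x|].
Proof.
rewrite -[X in measurable X]setTI.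
by apply: measurable_fun_le => //; exact: measurableT_comp.
Qed.

Lemma measurable_lt_norm (c : R) : measurable [set x | `|f x| < c].
Proof.
rewrite (_ : [set x | _] = ~` [set x | c <= `|f x|]); first exact/measurableC/measurable_ge_norm.
by apply/seteqP; split => x /=; rewrite ltNge => /negP.
Qed.

End measurable_norm_sets.

Lemma indic_mkset (T : Type) (R : pzRingType) (p : pred T) x :
  \1_[set y | p y] x = (p x)%:R :> R.
Proof. by rewrite indicE -[p x]asboolb. Qed.

Section lindeberg_ratios.
Context d (T : measurableType d) (R : realType) (P : probability T R).
Context (n : nat) (X : 'I_n -> {RV P >-> R}).
Local Open Scope ereal_scope.

Lemma Bn2_ge0 : (0 <= Bn2 X)%R.
Proof.
by apply: sumr_ge0 => i _; apply/fine_ge0/expectation_ge0 => x; exact: sqr_ge0.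
Qed.

Lemma Bn2E : Bn2 X = (Bn X ^+ 2)%R.
Proof. by rewrite sqr_sqrtr // Bn2_ge0. Qed.

Lemma Ln_add_Mn (e : R) : (0 < Bn X)%R ->
  Ln X e + Mn X e = \sum_(i < n) 'E_P[fun x => lindeberg_weight e (`|X i x| / Bn X)].
Proof.
move=> B0; rewrite /Ln /Mn Bn2E !ge0_sume_distrr -?big_split /=; last 2 first.
- by move=> i _; apply: expectation_ge0 => x; rewrite mulr_ge0 ?exprn_ge0.
- by move=> i _; apply: expectation_ge0 => x; rewrite mulr_ge0 ?sqr_ge0.
apply: eq_bigr => i _; have mXi := measurable_funPT (X i).
rewrite -ge0_expectationZD ?invr_ge0 ?exprn_ge0 ?ltW //.
- congr expectation; apply/funext => x.
  by rewrite lindeberg_weight_scale // !indic_mkset.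
- apply: measurable_funM; first exact: measurable_funX.
  exact/measurable_indic/measurable_ge_norm.
- apply: measurable_funM; first exact/measurable_funX/measurableT_comp.
  exact/measurable_indic/measurable_lt_norm.
- by move=> x; rewrite mulr_ge0 ?sqr_ge0.
Qed.

Lemma measurable_lindeberg_ratio (e : R) (i : 'I_n) :
  measurable_fun setT (fun x => lindeberg_weight e (`|X i x| / Bn X)).
Proof.
apply: measurableT_comp; first exact: measurable_lindeberg_weight.
apply: measurable_funM => //; exact/measurableT_comp/measurable_funPT.
Qed.

End lindeberg_ratios.

Local Open Scope ereal_scope.

Theorem lemma1 (d : measure_display) (T : measurableType d) (R : realType)
  (P : probability T R) (n : nat) (X : 'I_n -> {RV P >-> R}) :
  mutually_independent X ->
  (forall i, 'E_P[X i] = 0%E) ->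
  (forall i, (0 < 'E_P[(fun x => X i x ^+ 2)%R])%E /\ ('E_P[(fun x => X i x ^+ 2)%R] < +oo)%E) ->
  forall eps : R, (0 < eps)%R ->
  (Ln X 1%R + Mn X 1%R <= Ln X eps + Mn X eps)%E.
Proof.
move=> _ _ _ eps _.
have [B0|B0] := eqVneq (Bn X) 0%R.
  (* both sides vanish, as [0^-1 = 0] *)
  by rewrite /Ln /Mn Bn2E B0 !expr0n /= invr0 !mul0e.
have Bpos : (0 < Bn X)%R by rewrite lt0r B0 /Bn sqrtr_ge0.
rewrite !Ln_add_Mn //; apply: lee_sum => i _.
have ratio_ge0 x : (0 <= `|X i x| / Bn X)%R by rewrite divr_ge0 // ltW.
apply: expectation_le; try exact: measurable_lindeberg_ratio.
1,2: by move=> x; apply/lindeberg_weight_ge0/ratio_ge0.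
by apply: aeW => x; apply/lindeberg_weight1_le/ratio_ge0.
Qed.
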